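(* Let $d_0<d_1<\cdots$ be the increasing enumeration of $\{m\ge1:\ c_m=0\}$ and $z_n=\left(\frac{d_{4n}+1}{4}-n\right)\bmod 2$ for $n\ge0$. Then the sequence $(z_n)_{n\ge0}$ is not $2$-automatic.
   Context: For $n\in\mathbb{N}$ let $s_2(n)$ be the sum of the binary digits of $n$ and $t_n=s_2(n)\bmod 2$ (the Prouhet–Thue–Morse sequence). Let $F(X)=\sum_{n\ge1}t_nX^n\in\mathbb{F}_2[[X]]$ and let $G(X)=\sum_{n\ge1}c_nX^n\in\mathbb{F}_2[[X]]$ be its compositional inverse, i.e. $F(G(X))=G(F(X))=X$. The $c_n$ are identified with integers in $\{0,1\}$. The sequence $(d_n)$ is indexed from $0$, so $d_0=3$. A sequence $(u_n)$ is $k$-automatic if $u_n$ is the output of a deterministic finite automaton with output reading the base-$k$ expansion of $n$; equivalently its $k$-kernel $\{(u_{k^an+b})_{n}:\ a\ge0,\ 0\le b<k^a\}$ is finite. *)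

From HB Require Import structures.
From mathcomp Require Import all_boot all_order all_algebra.
Set Implicit Arguments. Unset Strict Implicit. Unset Printing Implicit Defensive.
Import GRing.Theory.
Local Open Scope ring_scope.

(* Sum of binary digits: bit i of n is odd (n %/ 2^i); bits i > n vanish. *)
Definition s2 (n : nat) : nat := (\sum_(i < n.+1) odd (n %/ 2 ^ i))%N.

Definition tm (n : nat) : bool := odd (s2 n).

(* Truncation of F(X) = sum_{n>=1} t_n X^n in F_2[[X]] to degree <= N. *)
Definition Ftrunc (N : nat) : {poly 'F_2} :=
  \poly_(i < N.+1) (((0 < i)%N && tm i)%:R : 'F_2).

Definition Gtrunc (c : nat -> 'F_2) (N : nat) : {poly 'F_2} :=
  \poly_(i < N.+1) c i.

(* G = sum_{n>=1} c_n X^n is the compositional inverse of F in F_2[[X]]: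
   c_0 = 0 and F(G(X)) = G(F(X)) = X coefficientwise.  Since both series have
   zero constant term, the coefficient of X^n (n <= N) of the composition
   only depends on the truncations to degree N. *)
Definition is_comp_inverse_of_TM (c : nat -> 'F_2) : Prop :=
  c 0%N = 0 /\
  forall N n : nat, (n <= N)%N ->
    ((Ftrunc N \Po Gtrunc c N)`_n = (n == 1%N)%:R) /\
    ((Gtrunc c N \Po Ftrunc N)`_n = (n == 1%N)%:R).

Definition is_increasing_enum_of_zeros (c : nat -> 'F_2) (d : nat -> nat) : Prop :=
  (forall n, (d n < d n.+1)%N) /\
  (forall m : nat, ((1 <= m)%N /\ c m = 0) <-> exists n, d n = m).

Definition zseq (d : nat -> nat) (n : nat) : int :=
  ((Posz ((d (4 * n)%N + 1) %/ 4)%N - Posz n) %% 2)%Z.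

(* k-automatic via finiteness of the k-kernel
   {(u_{k^a n + b})_n : a >= 0, 0 <= b < k^a}. *)
Definition automatic (T : Type) (k : nat) (u : nat -> T) : Prop :=
  exists s : seq (nat -> T),
    forall a b : nat, (b < k ^ a)%N ->
      exists2 i, (i < size s)%N &
        forall n, u (k ^ a * n + b)%N = nth u s i n.

(* From t_(2m) = t_m and t_(2m+1) = 1 + t_m, the Thue-Morse series satisfies
   (1 + X)^3 F^2 + (1 + X)^2 F + X = 0 over F_2, so its inverse G satisfies
   (1 + X + X G)^3 = 1 + X.  The cube root of 1 + X with constant term 1 is
   (1 + X) P(X^2), where P = prod_k (1 + X^(4^k)) enumerates the Moser-de Bruijn
   set of integers whose base-4 digits are 0 or 1.  Hence c_m = 0 exactly when
   m >= 1 and (m + 1)/2 is not in that set; the zeros come in aligned blocks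
   4q+3, ..., 4q+6, and counting them shows that z_n is the parity of the number
   of elements of the set below q/2 + 1, where d_(4n) = 4q + 3.  So z_n can be
   nonzero only at n = 8y - 2R(y) (R the counting function, y in the set), while
   z takes the value 1 at 2^(j+1) (2^(j+2) - 1).  If the 2-kernel were finite,
   two kernel sequences n |-> z(2^(j+1) n) with j1 < j2 would coincide; evaluated
   at 2^(j1+2) - 1 this puts 2^(j2+1) (2^(j1+2) - 1) in the support of z, which
   is ruled out by comparing 2-adic valuations. *)

From HB Require Import structures.
From mathcomp Require Import all_boot all_order all_algebra.
From mathcomp Require Import zify ring.
From Stdlib Require Import ClassicalEpsilon.
Set Implicit Arguments. Unset Strict Implicit. Unset Printing Implicit Defensive.
Import GRing.Theory.

(** * The Moser-de Bruijn set *)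

(* [mdb x]: every base-4 digit of [x] is 0 or 1.  The recursion is on fuel,
   and [x] units of fuel suffice because [x %/ 4 < x] for [x > 0]. *)
Fixpoint mdb_rec (fuel x : nat) : bool :=
  if fuel is f.+1 then (x %% 4 <= 1) && mdb_rec f (x %/ 4) else true.

Definition mdb (x : nat) : bool := mdb_rec x x.

Lemma mdb_recS f x : x <= f -> mdb_rec f.+1 x = mdb_rec f x.
Proof.
elim: f x => [|f IHf] x; first by rewrite leqn0 => /eqP ->.
move=> le_xf; congr (_ && _); apply: IHf.
by case: x le_xf => [|x] le_xf; rewrite ?div0n // -ltnS (leq_trans _ le_xf) ?ltn_Pdiv.
Qed.

Lemma mdb_rec_enough f x : x <= f -> mdb_rec f x = mdb x.
Proof.
move=> le_xf; rewrite /mdb -(subnK le_xf).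
by elim: (f - x) => // k <-; rewrite addSn mdb_recS ?leq_addl.
Qed.

Lemma mdb_base4 y r : r < 4 -> mdb (4 * y + r) = (r <= 1) && mdb y.
Proof.
move=> lt_r4; case E: (4 * y + r) => [|f].
  by have [-> ->] : y = 0 /\ r = 0 by lia.
rewrite /mdb /= -E.
have -> : (4 * y + r) %% 4 = r by lia.
have -> : (4 * y + r) %/ 4 = y by lia.
by rewrite mdb_rec_enough //; lia.
Qed.

Lemma mdb_pow4 j : mdb (4 ^ j).
Proof. by elim: j => // j IHj; rewrite expnS -[4 * _]addn0 mdb_base4. Qed.

Lemma mdb_factor y : 0 < y -> mdb y ->
  exists v u, y = 4 ^ v * (4 * u + 1) /\ mdb u.
Proof.
elim/ltn_ind: y => y IHy y_gt0.
rewrite {1}(divn_eq y 4) mulnC mdb_base4 ?ltn_mod // => /andP[r_le1 mdb_q].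
case: (posnP (y %% 4)) => [r0|r_gt0].
- have lt_q : y %/ 4 < y by rewrite ltn_Pdiv.
  have [|v [u [e mdb_u]]] := IHy (y %/ 4) lt_q _ mdb_q; first by lia.
  by exists v.+1, u; split=> //; rewrite expnS -mulnA -e; lia.
- by exists 0, (y %/ 4); rewrite expn0 mul1n; split => //; lia.
Qed.

Definition mdb_count (w : nat) : nat := \sum_(y < w) mdb y.

Lemma mdb_countS w : mdb_count w.+1 = mdb_count w + mdb w.
Proof. by rewrite /mdb_count big_ord_recr. Qed.

Lemma mdb_count_leq w : mdb_count w <= w.
Proof.
elim: w => [|w IHw]; first by rewrite /mdb_count big_ord0.
by rewrite mdb_countS; case: (mdb w); lia.
Qed.

Lemma mdb_count_add4 y r : r <= 4 ->
  mdb_count (4 * y + r) = mdb_count (4 * y) + minn r 2 * mdb y.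
Proof.
elim: r => [|r IHr] le_r4; first by rewrite !addn0.
rewrite addnS mdb_countS IHr 1?ltnW // mdb_base4 //.
by case: (mdb y); rewrite /= ?andbT ?andbF; lia.
Qed.

Lemma mdb_count_mul4 y : mdb_count (4 * y) = 2 * mdb_count y.
Proof.
elim: y => [|y IHy]; first by rewrite /mdb_count big_ord0.
by rewrite mulnS addnC mdb_count_add4 // IHy mdb_countS; lia.
Qed.

Lemma mdb_count_base4 y r : r <= 4 ->
  mdb_count (4 * y + r) = 2 * mdb_count y + minn r 2 * mdb y.
Proof. by move=> le_r4; rewrite mdb_count_add4 // mdb_count_mul4. Qed.

Lemma mdb_count_pow4 j : mdb_count (4 ^ j) = 2 ^ j.
Proof.
elim: j => [|j IHj]; first by rewrite /mdb_count big_ord1.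
by rewrite !expnS mdb_count_mul4 IHj.
Qed.

Lemma mdb_count_pow4_mul v w : mdb_count (4 ^ v * w) = 2 ^ v * mdb_count w.
Proof.
elim: v => [|v IHv]; first by rewrite !mul1n.
by rewrite !expnS -!mulnA mdb_count_mul4 IHv.
Qed.

Lemma odd_mdb_count w : odd (mdb_count w) -> exists2 y, w = 4 * y + 1 & mdb y.
Proof.
rewrite (divn_eq w 4) mulnC mdb_count_base4; last by rewrite ltnW ?ltn_mod.
rewrite oddD oddM /=; move: (ltn_mod w 4).
case: (w %% 4) => [|[|[|[|r]]]] //= _; rewrite /minn /= ?mul1n ?oddM //.
by case mdb_q: (mdb _) => // _; exists (w %/ 4).
Qed.

(** * The zeros of the inverse series *)

Definition tm_inv_zero (m : nat) : bool := (0 < m) && ~~ mdb (m.+1 %/ 2).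

Definition zero_count (m : nat) : nat := \sum_(k < m) tm_inv_zero k.

Lemma zero_countS m : zero_count m.+1 = zero_count m + tm_inv_zero m.
Proof. by rewrite /zero_count big_ord_recr. Qed.

Lemma zero_count_odd h :
  zero_count (2 * h + 1) + 2 * mdb_count (h + 1) = 2 * (h + 1).
Proof.
elim: h => [|h IHh]; first by rewrite /zero_count /mdb_count !big_ord1.
have -> : 2 * h.+1 + 1 = (2 * h + 1).+2 by lia.
have -> : h.+1 + 1 = (h + 1).+1 by lia.
rewrite !zero_countS mdb_countS /tm_inv_zero.
have -> : (2 * h + 1).+1 %/ 2 = h + 1 by lia.
have -> : (2 * h + 1).+2 %/ 2 = h + 1 by lia.
by move: IHh; case: (mdb (h + 1)) => /=; lia.
Qed.

Lemma mdb_pair q : mdb (2 * q + 3) = mdb (2 * q + 2).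
Proof.
have [qE|qE] : q = 2 * q./2 \/ q = 2 * q./2 + 1 by lia.
- have -> : 2 * q + 3 = 4 * q./2 + 3 by lia.
  have -> : 2 * q + 2 = 4 * q./2 + 2 by lia.
  by rewrite !mdb_base4.
- have -> : 2 * q + 3 = 4 * (q./2 + 1) + 1 by lia.
  have -> : 2 * q + 2 = 4 * (q./2 + 1) + 0 by lia.
  by rewrite !mdb_base4.
Qed.

Lemma tm_inv_zero_block q r : r < 4 ->
  tm_inv_zero (4 * q + 3 + r) = ~~ mdb (2 * q + 2).
Proof.
move=> lt_r4; rewrite /tm_inv_zero addn_gt0 addn_gt0 orbT /=.
case: r lt_r4 => [|[|[|[|r]]]] // _.
- by rewrite (_ : _ %/ 2 = 2 * q + 2) //; lia.
- by rewrite (_ : _ %/ 2 = 2 * q + 2) //; lia.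
- by rewrite (_ : _ %/ 2 = 2 * q + 3) ?mdb_pair; lia.
- by rewrite (_ : _ %/ 2 = 2 * q + 3) ?mdb_pair; lia.
Qed.

Lemma mdb_count_double_add2 q : mdb_count (2 * q + 2) = 2 * mdb_count (q./2 + 1).
Proof.
have [qE|qE] : q = 2 * q./2 \/ q = 2 * q./2 + 1 by lia.
- have -> : 2 * q + 2 = 4 * q./2 + 2 by lia.
  by rewrite mdb_count_base4 // addn1 mdb_countS; lia.
- have -> : 2 * q + 2 = 4 * (q./2 + 1) by lia.
  by rewrite mdb_count_mul4.
Qed.

Lemma zero_count_block q :
  zero_count (4 * q + 3) + 4 * mdb_count (q./2 + 1) = 4 * q + 4.
Proof.
have := zero_count_odd (2 * q + 1).
have -> : 2 * (2 * q + 1) + 1 = 4 * q + 3 by lia.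
by rewrite -addnA addnn -mul2n mdb_count_double_add2; lia.
Qed.

(** * Non-automaticity *)

Lemma logn2_pow2_mul_odd a X : odd X -> logn 2 (2 ^ a * X) = a.
Proof. by move=> odd_X; rewrite mulnC logn_Gauss ?coprime2n // pfactorK. Qed.

(* Comparing 2-adic valuations forces [y = 4^k (4u + 1)], which is too large. *)
Lemma pow2_mul_notin_support j k y : j < k -> mdb y ->
  2 ^ (k + 1) * (2 ^ (j + 2) - 1) <> 8 * y - 2 * mdb_count y.
Proof.
move=> lt_jk mdb_y; have [->|y_gt0] := posnP y.
  rewrite /mdb_count big_ord0 muln0 subn0; apply/eqP.
  rewrite muln_eq0 negb_or expn_eq0 subn_eq0 -ltnNge.
  by rewrite (leq_trans _ (ltn_expl _ (isT : 1 < 2))) // addn2.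
have [v [u [yE mdb_u]]] := mdb_factor y_gt0 mdb_y.
set a := 2 ^ v; have a_gt0 : 0 < a by rewrite expn_gt0.
have countE : mdb_count y = a * (2 * mdb_count u + 1).
  by rewrite yE mdb_count_pow4_mul mdb_count_base4 // mdb_u muln1.
have supportE : 8 * y - 2 * mdb_count y =
    2 ^ (v + 1) * (2 * (2 * a * (4 * u + 1) - mdb_count u - 1) + 1).
  have pow4E : 4 ^ v = a * a by rewrite -expnMn.
  have := mdb_count_leq u; rewrite countE yE pow4E expnD expn1 -/a; nia.
have oddE : 2 ^ (j + 2) - 1 = 2 * (2 * 2 ^ j - 1) + 1.
  by have := expn_gt0 2 j; rewrite expnD; lia.
rewrite supportE oddE => eq_pts.
have vk : v = k.
  have := congr1 (logn 2) eq_pts.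
  by rewrite !logn2_pow2_mul_odd ?oddD ?oddM //; lia.
move: eq_pts; rewrite vk => /eqP; rewrite eqn_pmul2l ?expn_gt0 // => /eqP.
have : 2 * 2 ^ j <= a by rewrite /a vk -expnS leq_exp2l.
have := mdb_count_leq u; nia.
Qed.

Lemma pigeonhole_rel L (P : nat -> nat -> Prop) :
  (forall j, j <= L -> exists2 i, i < L & P j i) ->
  exists j1 j2 i, [/\ j1 < j2, P j1 i & P j2 i].
Proof.
move=> HP.
have pick (j : 'I_L.+1) : {i : 'I_L | P j i}.
  apply: constructive_indefinite_description.
  by have [i lt_iL Pji] := HP j (ltn_ord j); exists (Ordinal lt_iL).
pose f j := sval (pick j).
have /injectivePn[j1 [j2 neq_j fE]] : ~~ injectiveb f.
  by apply/injectiveP => /leq_card; rewrite !card_ord ltnn.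
have [Pj1 Pj2] := (svalP (pick j1), svalP (pick j2)).
case: (ltngtP j1 j2) neq_j => [lt_j|lt_j|/val_inj->]; last by rewrite eqxx.
- by exists j1, j2, (f j1); split=> //; rewrite fE.
- by exists j2, j1, (f j2); split=> //; rewrite -fE.
Qed.

Section ZeroEnumeration.

Variable d : nat -> nat.
Hypothesis d_incr : forall n, d n < d n.+1.
Hypothesis d_enum : forall m, tm_inv_zero m <-> exists n, d n = m.

Let ltn_d : {mono d : m n / m < n}.
Proof. exact/leqW_mono/leq_mono/(homo_ltn ltn_trans d_incr). Qed.

Let not_zero_below0 k : k < d 0 -> tm_inv_zero k = false.
Proof. by move=> lt_k0; apply/negP => /d_enum[i ei]; move: lt_k0; rewrite -ei ltn_d. Qed.

Let not_zero_between n k : d n < k < d n.+1 -> tm_inv_zero k = false.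
Proof.
move=> /andP[lt_nk lt_kn]; apply/negP => /d_enum[i ei].
by move: lt_nk lt_kn; rewrite -ei !ltn_d; lia.
Qed.

Lemma zero_count_enum n : zero_count (d n) = n.
Proof.
have zero_countE m : zero_count m = \sum_(0 <= k < m) tm_inv_zero k.
  by rewrite big_mkord.
elim: n => [|n IHn].
  by rewrite zero_countE big_nat big1 // => k /not_zero_below0 ->.
rewrite zero_countE (@big_cat_nat _ _ _ (d n)) ?(ltnW (d_incr n)) //= -zero_countE IHn.
rewrite big_ltn // big_nat big1 => [|k /not_zero_between -> //].
suff -> : tm_inv_zero (d n) by rewrite addn0 addn1.
by apply/d_enum; exists n.
Qed.

Lemma enum_zero_count m k : tm_inv_zero m -> zero_count m = k -> d k = m.
Proof. by move=> /d_enum[i <-]; rewrite zero_count_enum => ->. Qed.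

(* Every fourth zero opens a block, since the count before a block is [0 mod 4]. *)
Lemma enum_mul4 n : exists q,
  [/\ d (4 * n) = 4 * q + 3, tm_inv_zero (4 * q + 3) & zero_count (4 * q + 3) = 4 * n].
Proof.
have zero_m : tm_inv_zero (d (4 * n)) by apply/d_enum; exists (4 * n).
have := zero_count_enum (4 * n); move: zero_m; move: (d (4 * n)) => m zero_m count_m.
have [q [r [em lt_r4]]] : exists q r, m = 4 * q + 3 + r /\ r < 4.
  have : 3 <= m by case: m zero_m {count_m} => [|[|[|m]]].
  by exists ((m - 3) %/ 4), ((m - 3) %% 4); split; lia.
subst m.
have zero_block r' : r' < 4 -> tm_inv_zero (4 * q + 3 + r').
  by move=> lt_r'4; rewrite tm_inv_zero_block // -(tm_inv_zero_block q lt_r4).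
have count_r : zero_count (4 * q + 3 + r) = zero_count (4 * q + 3) + r.
  elim: r lt_r4 {zero_m count_m} => [|r IHr] lt_r4; first by rewrite !addn0.
  by rewrite addnS zero_countS IHr ?zero_block 1?ltnW //; lia.
have block := zero_count_block q.
have r0 : r = 0 by lia.
by subst r; exists q; rewrite addn0 in zero_m count_m *.
Qed.

Lemma zseq_block n q :
  d (4 * n) = 4 * q + 3 -> zero_count (4 * q + 3) = 4 * n ->
  zseq d n = Posz (mdb_count (q./2 + 1) %% 2).
Proof.
move=> dE countE; rewrite /zseq dE.
have block := zero_count_block q.
have -> : (4 * q + 3 + 1) %/ 4 = n + mdb_count (q./2 + 1) by lia.
by rewrite PoszD addrC addKr modz_nat.
Qed.

Lemma zseq_neq0 n :
  zseq d n <> 0%R -> exists2 y, mdb y & n = 8 * y - 2 * mdb_count y.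
Proof.
have [q [dE zero_q countE]] := enum_mul4 n.
rewrite (zseq_block dE countE) modn2 => /eqP; rewrite eqz_nat eqb0 negbK.
move=> /odd_mdb_count[y yE mdb_y]; have block := zero_count_block q.
have [qE|qE] : q = 2 * q./2 \/ q = 2 * q./2 + 1 by lia.
- exists y => //; have := mdb_count_leq y.
  by move: block; rewrite yE mdb_count_base4 // mdb_y; lia.
- move: zero_q; rewrite -[4 * q + 3]addn0 tm_inv_zero_block //.
  have -> : 2 * q + 2 = 4 * (4 * y + 1) + 0 by lia.
  by rewrite !mdb_base4 // mdb_y.
Qed.

Lemma zseq_witness j : zseq d (2 ^ (j + 1) * (2 ^ (j + 2) - 1)) = 1%R.
Proof.
set x := 2 ^ j.
have -> : 2 ^ (j + 1) = 2 * x by rewrite expnD mulnC.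
have -> : 2 ^ (j + 2) = 4 * x by rewrite expnD mulnC.
have x_gt0 : 0 < x by rewrite expn_gt0.
pose q := 8 * 4 ^ j.
have zero_q : tm_inv_zero (4 * q + 3).
  rewrite -[4 * q + 3]addn0 tm_inv_zero_block //.
  have -> : 2 * q + 2 = 4 * (4 * 4 ^ j) + 2 by rewrite /q; lia.
  by rewrite mdb_base4.
have countE : mdb_count (q./2 + 1) = 2 * x + 1.
  have -> : q./2 + 1 = 4 * 4 ^ j + 1 by rewrite /q; lia.
  by rewrite mdb_count_base4 // mdb_count_pow4 mdb_pow4.
have zero_countE : zero_count (4 * q + 3) = 4 * (2 * x * (4 * x - 1)).
  have pow4E : 4 ^ j = x * x by rewrite -expnMn.
  have := zero_count_block q; rewrite countE /q pow4E; nia.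
rewrite (zseq_block (enum_zero_count zero_q zero_countE) zero_countE) countE.
by rewrite mulnC modnMDl.
Qed.

Lemma zseq_not_automatic : ~ automatic 2 (zseq d).
Proof.
move=> [s kernel].
have [|j1 [j2 [i [lt_j Pj1 Pj2]]]] := @pigeonhole_rel (size s)
    (fun j i => forall n, zseq d (2 ^ (j + 1) * n + 0) = nth (zseq d) s i n).
  by move=> j _; apply: kernel; rewrite expn_gt0.
have := Pj1 (2 ^ (j1 + 2) - 1); rewrite -Pj2 !addn0 zseq_witness // => witness.
have /zseq_neq0[y mdb_y] : zseq d (2 ^ (j2 + 1) * (2 ^ (j1 + 2) - 1)) <> 0%R.
  by rewrite -witness.
exact: pow2_mul_notin_support.
Qed.

End ZeroEnumeration.

(** * The functional equation of the Thue-Morse series *)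

Lemma s2_lt n K : n < K -> s2 n = \sum_(i < K) odd (n %/ 2 ^ i).
Proof.
elim: K => [|K IHK] //; rewrite ltnS leq_eqVlt => /orP[/eqP <- //|lt_nK].
rewrite big_ord_recr /= -IHK // divn_small ?addn0 //.
exact: ltn_trans lt_nK (ltn_expl _ _).
Qed.

Lemma s2_double n : s2 (2 * n) = s2 n.
Proof.
case: n => [|n] //; rewrite [LHS]/s2 big_ord_recl expn0 divn1 oddM /=.
rewrite (@s2_lt n.+1 (2 * n.+1)); last by lia.
by apply: eq_bigr => i _; rewrite /bump /= expnS divnMl.
Qed.

Lemma s2_doubleS n : s2 (2 * n + 1) = (s2 n).+1.
Proof.
rewrite [LHS]/s2 big_ord_recl expn0 divn1 oddD oddM add1n /=.
rewrite (@s2_lt n (2 * n + 1)); last by lia.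
congr _.+1; apply: eq_bigr => i _; rewrite /bump /= expnS divnMA.
by rewrite (_ : (2 * n + 1) %/ 2 = n) //; lia.
Qed.

Lemma tm_double n : tm (2 * n) = tm n.
Proof. by rewrite /tm s2_double. Qed.

Lemma tm_doubleS n : tm (2 * n).+1 = ~~ tm n.
Proof. by rewrite /tm -addn1 s2_doubleS. Qed.

Local Open Scope ring_scope.

Definition tm_coef (j : nat) : 'F_2 := ((0 < j)%N && tm j)%:R.

Lemma tm_coef_double j : tm_coef (2 * j) = tm_coef j.
Proof. by rewrite /tm_coef tm_double; case: j. Qed.

Lemma tm_coef_doubleS j : tm_coef (2 * j).+1 = 1 + tm_coef j.
Proof.
rewrite /tm_coef tm_doubleS /=.
by case: j => [|j] /=; [rewrite /tm /s2 big_ord1 | case: (tm j.+1)]; apply/eqP.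
Qed.

Lemma coef_Ftrunc N j : (j <= N)%N -> (Ftrunc N)`_j = tm_coef j.
Proof. by move=> le_jN; rewrite /Ftrunc coef_poly ltnS le_jN. Qed.

Lemma coef_Ftrunc_X2 N k : (k <= N)%N ->
  (Ftrunc N \Po 'X^2)`_k = if odd k then 0 else tm_coef k./2.
Proof.
move=> le_kN; rewrite coef_comp_poly_Xn // dvdn2 -divn2.
by case: (odd k) => //=; rewrite coef_Ftrunc // (leq_trans (leq_div _ _) le_kN).
Qed.

(* With [E := (1 + X) F(X^2) + F], the relations [t_(2m) = t_m] and
   [t_(2m+1) = 1 + t_m] read [E = X + X^3 + X^5 + ...]. *)
Lemma coef_tm_odd_series N k : (k <= N)%N ->
  ((1 + 'X) * (Ftrunc N \Po 'X^2) + Ftrunc N)`_k = (odd k)%:R.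
Proof.
move=> le_kN; rewrite mulrDl mul1r !coefD coefXM coef_Ftrunc // coef_Ftrunc_X2 //.
have char2 := pchar_Fp (isT : prime 2).
have [m [kE|kE]] : exists m, (k = 2 * m \/ k = 2 * m + 1)%N by exists k./2; lia.
- have -> : (if k == 0%N then 0 else (Ftrunc N \Po 'X^2)`_k.-1) = 0.
    case: eqP => // k_neq0; rewrite coef_Ftrunc_X2; last by lia.
    by rewrite kE -subn1 oddB ?oddM //; lia.
  rewrite kE oddM /= tm_coef_double (_ : (2 * m)./2 = m); last by lia.
  by rewrite addr0 addrr_pchar2.
- rewrite kE addn1 /= oddM coef_Ftrunc_X2 /=; last by lia.
  rewrite tm_coef_doubleS (_ : (2 * m)./2 = m); last by lia.
  by rewrite oddM add0r addrCA addrr_pchar2 // addr0.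
Qed.

Lemma dvdp_XnP (F : fieldType) M (p : {poly F}) :
  'X^M %| p <-> forall i, (i < M)%N -> p`_i = 0.
Proof.
split=> [/dvdpP[q ->] i lt_iM|p_lo]; first by rewrite coefMXn lt_iM.
rewrite -(poly_take_drop M p) (_ : take_poly M p = 0) ?add0r ?dvdp_mull //.
by apply/polyP => i; rewrite coef_take_poly coef0; case: ifP => // /p_lo.
Qed.

Lemma pchar2_polyF2 : (2 \in [char {poly 'F_2}])%N.
Proof. by rewrite pchar_poly pchar_Fp. Qed.

Lemma sqrD_polyF2 (p q : {poly 'F_2}) : (p + q) ^+ 2 = p ^+ 2 + q ^+ 2.
Proof. by rewrite sqrrD mulr2n addrr_pchar2 ?pchar2_polyF2 // addr0. Qed.

Lemma sqr_comp_X2 (p : {poly 'F_2}) : p ^+ 2 = p \Po 'X^2.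
Proof.
elim/poly_ind: p => [|p a IHp]; first by rewrite comp_poly0 expr2 mul0r.
rewrite comp_poly_MXaddC sqrD_polyF2 exprMn IHp -rmorphXn /=.
suff -> : a ^+ 2 = a by [].
by case: a => [[|[|]]] //= ?; apply/val_inj.
Qed.

Lemma tm_functional_eq N :
  'X^(N.+1) %| (1 + 'X) ^+ 3 * Ftrunc N ^+ 2 + (1 + 'X) ^+ 2 * Ftrunc N + 'X.
Proof.
have sqr1X : (1 + 'X) ^+ 2 = 1 + 'X^2 :> {poly 'F_2} by rewrite sqrD_polyF2 expr1n.
rewrite [(1 + 'X) ^+ 3]exprS sqr1X [Ftrunc N ^+ 2]sqr_comp_X2.
set E := (1 + 'X) * (Ftrunc N \Po 'X^2) + Ftrunc N.
have -> : (1 + 'X) * (1 + 'X^2) * (Ftrunc N \Po 'X^2) + (1 + 'X^2) * Ftrunc N + 'X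
    = E + 'X^2 * E + 'X by rewrite /E; ring.
have coefE i : (i <= N)%N -> E`_i = (odd i)%:R by apply: coef_tm_odd_series.
clearbody E; apply/dvdp_XnP => k; rewrite ltnS => le_kN.
rewrite !coefD coefXnM coefX coefE //.
have char2 := pchar_Fp (isT : prime 2).
case: k le_kN => [|[|k]] le_kN /=; rewrite ?addr0 ?addrr_pchar2 //.
by rewrite coefE ?subn2 /= ?negbK ?addr0 ?addrr_pchar2 //; lia.
Qed.

(** * The cubic equation of the inverse series *)

Lemma comp_poly_exp (R : comNzRingType) (p q : {poly R}) n :
  (p ^+ n) \Po q = (p \Po q) ^+ n.
Proof.
by elim: n => [|n IHn]; rewrite ?expr0 ?comp_polyC // !exprS comp_polyM IHn.
Qed.

Lemma dvdp_Xn_comp (R : idomainType) M (p q : {poly R}) :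
  'X %| q -> 'X^M %| p -> 'X^M %| p \Po q.
Proof.
move=> Xq /(dvdp_comp_poly q); rewrite comp_Xn_poly.
exact/dvdp_trans/dvdp_exp2r.
Qed.

Lemma tm_inv_cube c N : is_comp_inverse_of_TM c ->
  'X^(N.+2) %| (1 + 'X + 'X * Gtrunc c N) ^+ 3 - (1 + 'X).
Proof.
move=> [c0 inv]; set G := Gtrunc c N; set W := Ftrunc N \Po G.
have FG_X : 'X^(N.+1) %| W - 'X.
  apply/dvdp_XnP => i; rewrite ltnS => le_iN.
  by rewrite coefB coefX (proj1 (inv N i le_iN)) subrr.
have XG : 'X %| G.
  by rewrite -(expr1 'X); apply/dvdp_XnP => -[|//] _; rewrite coef_poly.
have := dvdp_Xn_comp XG (tm_functional_eq N).
rewrite !(comp_polyD, comp_polyM, comp_polyX, comp_polyC, comp_poly_exp) -/W.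
set Y := (1 + G) ^+ 3 * W ^+ 2 + (1 + G) ^+ 2 * W + G => XY.
have X_cubic : 'X^(N.+1) %| (1 + G) ^+ 3 * 'X ^+ 2 + (1 + G) ^+ 2 * 'X + G.
  rewrite (_ : _ + G = Y - (W - 'X) * ((1 + G) ^+ 3 * (W + 'X) + (1 + G) ^+ 2)).
    by rewrite dvdp_sub ?dvdp_mulr.
  by rewrite /Y; ring.
rewrite (_ : _ - _ = 'X * ((1 + G) ^+ 3 * 'X ^+ 2 + (1 + G) ^+ 2 * 'X + G)
  + 2%:R * (('X + 'X * G) ^+ 2 + ('X + 'X * G))); last by ring.
by rewrite (pcharf0 pchar2_polyF2) mul0r addr0 exprS dvdp_mul.
Qed.

(** * The cube root of [1 + X] *)

Fixpoint mdb_poly (K : nat) : {poly 'F_2} :=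
  if K is K'.+1 then (1 + 'X) * (mdb_poly K' \Po 'X^4) else 1.

Lemma comp_1X (R : nzRingType) (p : {poly R}) : (1 + 'X) \Po p = 1 + p.
Proof. by rewrite comp_polyD comp_polyX comp_polyC. Qed.

Lemma mdb_poly_cube K : (1 + 'X) * mdb_poly K ^+ 3 = 1 + 'X^(4 ^ K).
Proof.
elim: K => [|K IHK]; first by rewrite expr1n mulr1 expn0 expr1.
have pow4_1X : (1 + 'X) ^+ 4 = 1 + 'X^4 :> {poly 'F_2}.
  by rewrite -[4%N]/(2 * 2)%N exprM !sqrD_polyF2 !expr1n -exprM.
rewrite /= exprMn mulrA -exprS pow4_1X.
rewrite -(comp_1X 'X^4) -comp_poly_exp -comp_polyM IHK.
by rewrite comp_polyD comp_polyC comp_Xn_poly -exprM expnS.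
Qed.

Lemma mdb_poly_X2_cube K :
  ((1 + 'X) * (mdb_poly K \Po 'X^2)) ^+ 3 = (1 + 'X) * (1 + 'X^(2 * 4 ^ K)).
Proof.
rewrite exprMn [(1 + 'X) ^+ 3]exprS -mulrA sqrD_polyF2 expr1n.
rewrite -(comp_1X 'X^2) -comp_poly_exp -comp_polyM mdb_poly_cube.
by rewrite comp_polyD comp_polyC comp_Xn_poly -exprM.
Qed.

Lemma coef_mdb_poly K j : (mdb_poly K)`_j = ((j < 4 ^ K)%N && mdb j)%:R.
Proof.
elim: K j => [|K IHK] j; first by rewrite coef1 expn0; case: j.
rewrite /= mulrDl mul1r coefD coefXM !coef_comp_poly_Xn // expnS.
rewrite (divn_eq j 4) mulnC.
have := ltn_pmod j (isT : 0 < 4)%N; move: (j %/ 4)%N (j %% 4)%N => y r lt_r4.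
rewrite mdb_base4 // (_ : (4 * y + r < 4 * 4 ^ K)%N = (y < 4 ^ K)%N); last by lia.
have dvd4E i : (i < 4)%N -> (4 %| 4 * y + i)%N = (i == 0%N) by lia.
have dvd4SE i : (i < 3)%N -> (4 %| (4 * y + i.+1).-1)%N = (i == 0%N) by lia.
case: r lt_r4 => [|[|[|[|r]]]] // _.
- rewrite dvd4E // eqxx addn0 mulKn // IHK.
  case: eqP => [_|/eqP y4_neq0]; first by rewrite addr0.
  by rewrite ifF ?addr0; last by lia.
- rewrite dvd4E // dvd4SE // add0r ifF; last by lia.
  by rewrite addn1 succnK mulKn // IHK.
- by rewrite dvd4E // dvd4SE // !ifF /= ?andbF ?addr0 //; lia.
- by rewrite dvd4E // dvd4SE // !ifF /= ?andbF ?addr0 //; lia.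
Qed.

Lemma dvdp_Xn_cube_eq (F : fieldType) L (A B C : {poly F}) :
  A.[0] = B.[0] -> A.[0] ^+ 2 *+ 3 != 0 ->
  'X^L %| A ^+ 3 - C -> 'X^L %| B ^+ 3 - C -> 'X^L %| A - B.
Proof.
move=> AB0 A0_neq0 XA XB.
have : 'X^L %| (A - B) * (A ^+ 2 + A * B + B ^+ 2).
  suff -> : (A - B) * (A ^+ 2 + A * B + B ^+ 2) = (A ^+ 3 - C) - (B ^+ 3 - C).
    exact: dvdp_sub.
  by ring.
rewrite Gauss_dvdpl // coprimep_expl // coprimep_sym -['X]subr0 coprimep_XsubC.
rewrite rootE; suff -> : (A ^+ 2 + A * B + B ^+ 2).[0] = A.[0] ^+ 2 *+ 3 by [].
by rewrite !hornerE -AB0; ring.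
Qed.

Lemma tm_inv_coef c n : is_comp_inverse_of_TM c -> (0 < n)%N ->
  c n = (mdb (n.+1 %/ 2))%:R.
Proof.
move=> inv n_gt0.
set A := 1 + 'X + 'X * Gtrunc c n; set B := (1 + 'X) * (mdb_poly n \Po 'X^2).
have XB : 'X^(n.+2) %| B ^+ 3 - (1 + 'X).
  rewrite mdb_poly_X2_cube (_ : _ - _ = (1 + 'X) * 'X^(2 * 4 ^ n)); last by ring.
  by rewrite dvdp_mull // dvdp_exp2l //; have := ltn_expl n (isT : 1 < 4)%N; lia.
have A0 : A.[0] = 1 by rewrite !hornerE.
have AB0 : A.[0] = B.[0].
  rewrite A0 !hornerE horner_comp hornerXn expr0n /= horner_coef0.
  by rewrite coef_mdb_poly expn_gt0 /= mulr1n.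
have A0_3 : A.[0] ^+ 2 *+ 3 != 0 by rewrite A0 expr1n.
have /dvdp_XnP coef_AB := dvdp_Xn_cube_eq AB0 A0_3 (tm_inv_cube n inv) XB.
have coef_B i : (i <= n.+1)%N ->
    (mdb_poly n \Po 'X^2)`_i = if odd i then 0 else (mdb i./2)%:R.
  move=> le_in; rewrite coef_comp_poly_Xn // coef_mdb_poly dvdn2 -divn2.
  have := ltn_expl n (isT : 1 < 4)%N.
  by case: (odd i) => //= lt_n4; rewrite (_ : (i %/ 2 < 4 ^ n)%N) //; lia.
move: (coef_AB n.+1 (ltnSn _)) => /eqP; rewrite coefB subr_eq0 => /eqP.
rewrite /A /B !coefD coef1 coefX coefXM /Gtrunc coef_poly ltnSn.
rewrite mulrDl mul1r coefD coefXM.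
rewrite !coef_B // (_ : (n.+1 == 1)%N = false) ?mulr0n ?add0r ?succnK; last by lia.
rewrite divn2 /=; case: (boolP (odd n)) => odd_n /= ->; first by rewrite addr0.
by rewrite add0r uphalf_half (negbTE odd_n).
Qed.

Local Close Scope ring_scope.

Lemma tm_inv_zeroP c m : is_comp_inverse_of_TM c ->
  tm_inv_zero m <-> (1 <= m) /\ c m = 0%R.
Proof.
move=> inv; rewrite /tm_inv_zero.
case: (posnP m) => [->|m_gt0]; first by split=> // -[].
by rewrite tm_inv_coef //; case: (mdb _); split=> //= -[_ /eqP]; rewrite ?oner_eq0.
Qed.

Theorem mainTheorem14 (c : nat -> 'F_2) (d : nat -> nat) :
  is_comp_inverse_of_TM c ->
  is_increasing_enum_of_zeros c d ->
  ~ automatic 2 (zseq d).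
Proof.
move=> inv [d_incr d_enum]; apply: (zseq_not_automatic d_incr) => m.
rewrite (tm_inv_zeroP m inv); exact: d_enum.
Qed.
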